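(* Let $X$ be a real Banach space and $A$ a non-empty subset of $X$. Let $\mathsf P$ be any one of: remotal, uniquely remotal, strongly remotal, SUR, USUR, sup-compact. Then $B_X$ has property $\mathsf P$ on $A$ if and only if $S_X$ has property $\mathsf P$ on $A$.
   Context: $B_X,S_X$ are the closed unit ball and unit sphere. For non-empty bounded $F$, $x\in X$, $\delta\ge0$: $r(F,x)=\sup_{y\in F}\|x-y\|$, $Q_F(x,\delta)=\{y\in F:\|x-y\|\ge r(F,x)-\delta\}$, $Q_F(x)=Q_F(x,0)$. On a set $A$, $F$ is: remotal if $Q_F(x)\neq\emptyset$ for each $x\in A$; uniquely remotal if $Q_F(x)$ is a singleton for each $x\in A$; strongly remotal if for every $x\in A$ and $\epsilon>0$ there is $\delta>0$ with $Q_F(x,\delta)\subseteq Q_F(x)+\epsilon B_X$; SUR if uniquely remotal and strongly remotal; USUR if uniquely remotal and for every $\epsilon>0$ there is $\delta>0$ with $Q_F(x,\delta)\subseteq Q_F(x)+\epsilon B_X$ for all $x\in A$; sup-compact if for each $x\in A$ every sequence $(y_n)$ in $F$ with $\|x-y_n\|\to r(F,x)$ has a subsequence converging to an element of $F$. *)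

From HB Require Import structures.
From mathcomp Require Import all_boot all_order all_algebra.
From mathcomp Require Import all_classical all_reals all_analysis.
Set Implicit Arguments. Unset Strict Implicit. Unset Printing Implicit Defensive.
Import Order.TTheory GRing.Theory Num.Theory.
Import numFieldNormedType.Exports.
Local Open Scope classical_set_scope.
Local Open Scope ring_scope.

Section Remotal.
Context {R : realType} {X : normedModType R}.

Definition unit_ball : set X := [set x | `|x| <= 1].
Definition unit_sphere : set X := [set x | `|x| = 1].

Definition farthest_radius (F : set X) (x : X) : R :=
  sup [set `|x - y| | y in F].

Definition Qset (F : set X) (x : X) (d : R) : set X :=
  [set y | F y /\ farthest_radius F x - d <= `|x - y|].

Definition Q0 (F : set X) (x : X) : set X := Qset F x 0.

Definition add_ball (S : set X) (e : R) : set X :=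
  [set y | exists2 z, S z & `|y - z| <= e].

Definition remotal_on (F A : set X) : Prop :=
  forall x, A x -> Q0 F x !=set0.

Definition uniquely_remotal_on (F A : set X) : Prop :=
  forall x, A x -> exists y, Q0 F x = [set y].

Definition strongly_remotal_on (F A : set X) : Prop :=
  forall x, A x -> forall e : R, 0 < e ->
    exists2 d : R, 0 < d & Qset F x d `<=` add_ball (Q0 F x) e.

Definition SUR_on (F A : set X) : Prop :=
  uniquely_remotal_on F A /\ strongly_remotal_on F A.

Definition USUR_on (F A : set X) : Prop :=
  uniquely_remotal_on F A /\
  forall e : R, 0 < e -> exists2 d : R, 0 < d &
    forall x, A x -> Qset F x d `<=` add_ball (Q0 F x) e.

Definition sup_compact_on (F A : set X) : Prop :=
  forall x, A x -> forall y : nat -> X, (forall n, F (y n)) ->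
    (fun n => `|x - y n|) @ \oo --> farthest_radius F x ->
    exists phi : nat -> nat, (forall n, (phi n < phi n.+1)%N) /\
      exists2 z, F z & (y \o phi) @ \oo --> z.

End Remotal.

From HB Require Import structures.
From mathcomp Require Import all_boot all_order all_algebra.
From mathcomp Require Import all_classical all_reals all_analysis.
From mathcomp Require Import lra.

(* For every x there is a unit vector u with |x - u| = |x| + 1 (u = -x/|x|, or
   any unit vector if x = 0), so the ball and the sphere have the same farthest
   radius |x| + 1, and by |x - y| <= |x| + |y| every farthest point of the ball
   lies on the sphere: Q_B(x) = Q_S(x).  Conversely, the radial projection
   y |-> y/|y| moves a point y of Q_B(x, d) by 1 - |y| <= d and lands in
   Q_S(x, 2d).  This transfers strong remotality and maximizing sequences from
   the sphere to the ball; the other direction follows from S ⊆ B and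
   Q_S(x, d) ⊆ Q_B(x, d). *)

Set Implicit Arguments.
Unset Strict Implicit.
Unset Printing Implicit Defensive.
Import Order.TTheory GRing.Theory Num.Theory.
Import numFieldNormedType.Exports.
Local Open Scope classical_set_scope.
Local Open Scope ring_scope.

Lemma cvg_subseq {T : topologicalType} (u : nat -> T) (phi : nat -> nat) (l : T) :
  (forall n, (phi n < phi n.+1)%N) -> u @ \oo --> l -> (u \o phi) @ \oo --> l.
Proof.
move=> phiS ul; apply: cvg_comp ul; apply/cvgnyPge => N; exists N => // n /= Nn.
suff : (n <= phi n)%N by exact: leq_trans.
by elim: n {Nn} => // n IHn; exact: leq_ltn_trans IHn (phiS n).
Qed.

Section UnitBallSphere.
Context {R : realType} {X : normedModType R}.
Implicit Types (x y u : X) (A F : set X) (d e : R).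

Lemma unit_sphere_sub_ball : unit_sphere `<=` (unit_ball : set X).
Proof. by move=> y; rewrite /unit_sphere /unit_ball /= => ->. Qed.

Lemma le_Qset F x d d' : d <= d' -> Qset F x d `<=` Qset F x d'.
Proof. by move=> le_dd' y [Fy Qy]; split=> //; apply: le_trans Qy; lra. Qed.

Lemma closed_unit_sphere : closed (unit_sphere : set X).
Proof.
exact: preimage_closed (in1W (@norm_continuous _ X)) (closed_eq (y:=1)).
Qed.

Lemma farthest_radius_attained F x u : F `<=` unit_ball -> F u ->
  `|x - u| = `|x| + 1 -> farthest_radius F x = `|x| + 1.
Proof.
move=> FB Fu xu; apply/le_anti/andP; split.
- apply: ge_sup; first by exists `|x - u|, u.
  by move=> _ [y Fy <-]; apply: le_trans (ler_normB x y) _; rewrite lerD2l; exact: FB.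
- rewrite -xu; apply: ub_le_sup; last by exists u.
  exists (`|x| + 1) => _ [y Fy <-].
  by apply: le_trans (ler_normB x y) _; rewrite lerD2l; exact: FB.
Qed.

Definition radial_proj (u0 y : X) : X := if y == 0 then u0 else `|y|^-1 *: y.

Lemma norm_radial_proj u0 y : `|u0| = 1 -> `|radial_proj u0 y| = 1.
Proof. by rewrite /radial_proj; case: eqVneq => // y0 _; rewrite normfZV. Qed.

Lemma dist_radial_proj u0 y : `|u0| = 1 -> `|y| <= 1 ->
  `|y - radial_proj u0 y| = 1 - `|y|.
Proof.
rewrite /radial_proj; case: eqVneq => [-> u1 _|y0 _ y1].
  by rewrite sub0r normrN normr0 subr0.
rewrite -{1}(scale1r y) -scalerBl normrZ -{2}normr_id -normrM mulrBl mul1r.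
by rewrite mulVf ?normr_eq0 // distrC ger0_norm ?subr_ge0.
Qed.

Section NontrivialSpace.
Hypothesis X_nontrivial : exists v : X, v != 0.

Lemma exists_unit_vector : exists u : X, `|u| = 1.
Proof. by have [v v0] := X_nontrivial; exists (`|v|^-1 *: v); rewrite normfZV. Qed.

Lemma exists_unit_antipode x : exists2 u, `|u| = 1 & `|x - u| = `|x| + 1.
Proof.
have [->|x0] := eqVneq x 0.
  by have [u u1] := exists_unit_vector; exists u; rewrite // sub0r normrN normr0 add0r.
exists (- (`|x|^-1 *: x)); first by rewrite normrN normfZV.
have xgt0 : 0 < `|x| by rewrite normr_gt0.
rewrite opprK -{1}(scale1r x) -scalerDl normrZ ger0_norm ?addr_ge0 ?invr_ge0 ?ltW //.
by rewrite mulrDl mul1r mulVf ?gt_eqF // addrC.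
Qed.

Lemma farthest_radius_sphere x : farthest_radius unit_sphere x = `|x| + 1.
Proof.
have [u u1 xu] := exists_unit_antipode x.
exact: farthest_radius_attained unit_sphere_sub_ball u1 xu.
Qed.

Lemma farthest_radius_ball x : farthest_radius unit_ball x = `|x| + 1.
Proof.
have [u u1 xu] := exists_unit_antipode x.
exact: farthest_radius_attained (@subset_refl _ unit_ball) (unit_sphere_sub_ball u1) xu.
Qed.

Lemma Q0_ball_sphere x : Q0 unit_ball x = Q0 unit_sphere x.
Proof.
rewrite /Q0 /Qset farthest_radius_ball farthest_radius_sphere subr0.
apply/seteqP; split=> y /= [y1 xy]; split=> //; last exact: unit_sphere_sub_ball.
move: y1; rewrite /unit_ball /unit_sphere /= => y1.
by apply/le_anti; rewrite y1 /=; have := ler_normB x y; lra.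
Qed.

Lemma Qset_sphere_sub_ball x d : Qset unit_sphere x d `<=` Qset unit_ball x d.
Proof.
rewrite /Qset farthest_radius_ball farthest_radius_sphere => y [y1 xy].
by split=> //; exact: unit_sphere_sub_ball.
Qed.

Section RadialProjection.
Variable u0 : X.
Hypothesis u0_unit : `|u0| = 1.

Lemma Qset_ball_radial_proj x d y :
  Qset unit_ball x d y -> Qset unit_sphere x (d *+ 2) (radial_proj u0 y).
Proof.
rewrite /Qset farthest_radius_ball farthest_radius_sphere => -[y1 xy].
split; first exact: norm_radial_proj.
have := ler_distD (radial_proj u0 y) x y.
rewrite (distrC (radial_proj u0 y)) dist_radial_proj // mulr2n.
have := ler_normB x y; lra.
Qed.

Lemma dist_radial_proj_Qset_ball x d y :
  Qset unit_ball x d y -> `|y - radial_proj u0 y| <= d.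
Proof.
rewrite /Qset farthest_radius_ball => -[y1 xy].
by rewrite dist_radial_proj //; have := ler_normB x y; lra.
Qed.

Lemma radial_proj_maximizing (x : X) (y : nat -> X) :
  (forall n, `|y n| <= 1) -> `|x - y n| @[n --> \oo] --> `|x| + 1 ->
  `|x - radial_proj u0 (y n)| @[n --> \oo] --> `|x| + 1.
Proof.
(* |x - p y| >= |x - y| - (1 - |y|) >= 2 |x - y| - (|x| + 1) *)
move=> y1 xy; have lower := cvgB (cvgD xy xy) (cvg_cst (`|x| + 1)).
rewrite addrK in lower; apply: squeeze_cvgr; [|exact: lower|exact: cvg_cst].
apply: nearW => n; rewrite !fctE; have := ler_normB x (radial_proj u0 (y n)).
have := ler_distD (radial_proj u0 (y n)) x (y n).
rewrite (distrC (radial_proj u0 (y n))) norm_radial_proj // dist_radial_proj //.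
by have := ler_normB x (y n); have := y1 n; lra.
Qed.

Lemma sub_radial_proj_cvg0 (x : X) (y : nat -> X) :
  (forall n, `|y n| <= 1) -> `|x - y n| @[n --> \oo] --> `|x| + 1 ->
  y n - radial_proj u0 (y n) @[n --> \oo] --> 0.
Proof.
move=> y1 xy; apply: norm_cvg0.
have upper := cvgB (cvg_cst (`|x| + 1)) xy; rewrite subrr in upper.
apply: squeeze_cvgr; [|exact: cvg_cst|exact: upper].
apply: nearW => n; rewrite !fctE dist_radial_proj //.
by have := ler_normB x (y n); have := y1 n; lra.
Qed.

End RadialProjection.

Lemma Qset_approx_sphere_of_ball x d e :
  Qset unit_ball x d `<=` add_ball (Q0 unit_ball x) e ->
  Qset unit_sphere x d `<=` add_ball (Q0 unit_sphere x) e.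
Proof. by rewrite Q0_ball_sphere => approxB y /Qset_sphere_sub_ball /approxB. Qed.

Lemma Qset_approx_ball_of_sphere x d e :
  Qset unit_sphere x d `<=` add_ball (Q0 unit_sphere x) (e / 2) ->
  Qset unit_ball x (Num.min (d / 2) (e / 2)) `<=` add_ball (Q0 unit_ball x) e.
Proof.
move=> approxS y Qy; have [u0 u0_unit] := exists_unit_vector.
have le_d : Num.min (d / 2) (e / 2) <= d / 2 by rewrite ge_min lexx.
have le_e : Num.min (d / 2) (e / 2) <= e / 2 by rewrite ge_min lexx orbT.
have /approxS [z Qz pz] : Qset unit_sphere x d (radial_proj u0 y).
  apply: le_Qset (Qset_ball_radial_proj u0_unit Qy).
  by rewrite mulr2n; lra.
exists z; first by rewrite Q0_ball_sphere.
have := ler_distD (radial_proj u0 y) y z.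
by have := dist_radial_proj_Qset_ball u0_unit Qy; lra.
Qed.

Lemma remotal_on_ball_sphere A :
  remotal_on unit_ball A <-> remotal_on unit_sphere A.
Proof. by rewrite /remotal_on; setoid_rewrite Q0_ball_sphere. Qed.

Lemma uniquely_remotal_on_ball_sphere A :
  uniquely_remotal_on unit_ball A <-> uniquely_remotal_on unit_sphere A.
Proof. by rewrite /uniquely_remotal_on; setoid_rewrite Q0_ball_sphere. Qed.

Lemma strongly_remotal_on_ball_sphere A :
  strongly_remotal_on unit_ball A <-> strongly_remotal_on unit_sphere A.
Proof.
split=> remA x Ax e e_gt0.
  have [d d_gt0 approxB] := remA x Ax e e_gt0.
  by exists d => //; exact: Qset_approx_sphere_of_ball.
have [d d_gt0 approxS] := remA x Ax (e / 2) (divr_gt0 e_gt0 (ltr0Sn _ 1)).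
exists (Num.min (d / 2) (e / 2)); last exact: Qset_approx_ball_of_sphere.
by rewrite lt_min !divr_gt0.
Qed.

Lemma SUR_on_ball_sphere A : SUR_on unit_ball A <-> SUR_on unit_sphere A.
Proof.
by rewrite /SUR_on uniquely_remotal_on_ball_sphere strongly_remotal_on_ball_sphere.
Qed.

Lemma USUR_on_ball_sphere A : USUR_on unit_ball A <-> USUR_on unit_sphere A.
Proof.
rewrite /USUR_on uniquely_remotal_on_ball_sphere.
split=> -[uremA remA]; split=> // e e_gt0.
  have [d d_gt0 approxB] := remA e e_gt0.
  by exists d => // x Ax; exact: Qset_approx_sphere_of_ball (approxB x Ax).
have [d d_gt0 approxS] := remA (e / 2) (divr_gt0 e_gt0 (ltr0Sn _ 1)).
exists (Num.min (d / 2) (e / 2)); first by rewrite lt_min !divr_gt0.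
by move=> x Ax; exact: Qset_approx_ball_of_sphere (approxS x Ax).
Qed.

Lemma sup_compact_on_ball_sphere A :
  sup_compact_on unit_ball A <-> sup_compact_on unit_sphere A.
Proof.
split=> scA x Ax y Fy.
  rewrite farthest_radius_sphere -farthest_radius_ball => xy.
  have [phi [phiS [z _ yz]]] := scA x Ax y (fun n => unit_sphere_sub_ball (Fy n)) xy.
  exists phi; split=> //; exists z => //.
  apply: (closed_cvg _ closed_unit_sphere _ _ yz).
  by apply: nearW => n; exact: Fy.
rewrite farthest_radius_ball => xy; have [u0 u0_unit] := exists_unit_vector.
pose p n := radial_proj u0 (y n).
have [|phi [phiS [z Sz pz]]] := scA x Ax p (fun n => norm_radial_proj _ u0_unit).
  by rewrite farthest_radius_sphere; exact: radial_proj_maximizing.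
exists phi; split=> //; exists z; first exact: unit_sphere_sub_ball.
have -> : y \o phi = (p \o phi) + ((fun n => y n - p n) \o phi).
  by apply/funext => n; rewrite !fctE subrKC.
rewrite -[z]addr0; apply: cvgD => //.
exact: cvg_subseq phiS (sub_radial_proj_cvg0 u0_unit Fy xy).
Qed.

End NontrivialSpace.
End UnitBallSphere.

Theorem proposition2p15 (R : realType) (X : completeNormedModType R)
  (A : set X) (hA : A !=set0) (hX : exists x : X, x != 0) :
  (remotal_on unit_ball A <-> remotal_on unit_sphere A) /\
  (uniquely_remotal_on unit_ball A <-> uniquely_remotal_on unit_sphere A) /\
  (strongly_remotal_on unit_ball A <-> strongly_remotal_on unit_sphere A) /\
  (SUR_on unit_ball A <-> SUR_on unit_sphere A) /\
  (USUR_on unit_ball A <-> USUR_on unit_sphere A) /\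
  (sup_compact_on unit_ball A <-> sup_compact_on unit_sphere A).
Proof.
split; first exact: remotal_on_ball_sphere.
split; first exact: uniquely_remotal_on_ball_sphere.
split; first exact: strongly_remotal_on_ball_sphere.
split; first exact: SUR_on_ball_sphere.
split; first exact: USUR_on_ball_sphere.
exact: sup_compact_on_ball_sphere.
Qed.
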